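(* Let $N\ge1$, $M=N$, and let $w_{mn}=N^{-1/2}\exp(-2\pi j\,mn/N)$ for $0\le m,n<N$ (the unitary discrete Fourier kernel, corresponding to infinite propagation distance). Suppose the targets are attainable: there exists $\boldsymbol C\in(\mathbb{C}\setminus\{0\})^N$ with $|i_m|^2=|p_m(\boldsymbol C)|^2$ for all $m$. Then for every $\boldsymbol c\in(\mathbb{C}\setminus\{0\})^N$ (in particular every iterate $\boldsymbol c[\tau]$ of the Wirtinger flow, regardless of the initial value) and every $n$, $$\Big|\frac{\partial L}{\partial\bar c_n}(\boldsymbol c)\Big|\le\frac{1}{|c_n|}.$$
   Context: Setup (WFCF). $j$ denotes the imaginary unit. For $\boldsymbol c=(c_0,\dots,c_{N-1})\in(\mathbb{C}\setminus\{0\})^N$ define $h_n(c_n)=c_n/|c_n|$, $p_m(\boldsymbol c)=\sum_{n=0}^{N-1}w_{mn}h_n(c_n)$, and the loss $L(\boldsymbol c)=\frac{1}{8N^2}\sum_{m=0}^{M-1}\big(|p_m(\boldsymbol c)|^2-|i_m|^2\big)^2$, where $|i_m|^2\ge0$ are given target values. Writing $c_n=a_n+jb_n$ with $a_n,b_n$ real, the Wirtinger derivative of a (real- or complex-valued) function $f$ with respect to $\bar c_n$ is $\frac{\partial f}{\partial \bar c_n}=\frac12\big(\frac{\partial f}{\partial a_n}+j\frac{\partial f}{\partial b_n}\big)$. The Wirtinger flow iteration is $c_n[\tau+1]=c_n[\tau]-\alpha\frac{\partial L}{\partial\bar c_n}(\boldsymbol c[\tau])$ with a real learning rate $\alpha>0$.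 *)

From Stdlib Require Import Reals.
From Coquelicot Require Import Coquelicot.
Open Scope R_scope.

Fixpoint csum (n : nat) (f : nat -> C) : C :=
  match n with O => RtoC 0 | S k => Cplus (csum k f) (f k) end.
Fixpoint rsum (n : nat) (f : nat -> R) : R :=
  match n with O => 0 | S k => rsum k f + f k end.

Definition jC : C := (0, 1).

Definition hph (c : C) : C := Cmult (RtoC (/ Cmod c)) c.

Definition pm (N : nat) (w : nat -> nat -> C) (c : nat -> C) (m : nat) : C :=
  csum N (fun n => Cmult (w m n) (hph (c n))).

(* L(c) = 1/(8 N^2) sum_{m<M} (|p_m(c)|^2 - |i_m|^2)^2, with i2 m = |i_m|^2 *)
Definition Loss (N M : nat) (w : nat -> nat -> C) (i2 : nat -> R)
  (c : nat -> C) : R :=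
  / (8 * (INR N) ^ 2) * rsum M (fun m => (Cmod (pm N w c m) ^ 2 - i2 m) ^ 2).

Definition dft (N : nat) (m n : nat) : C :=
  Cmult (RtoC (/ sqrt (INR N)))
    (cos (2 * PI * INR m * INR n / INR N),
     - sin (2 * PI * INR m * INR n / INR N)).

Definition upd (c : nat -> C) (n : nat) (z : C) : nat -> C :=
  fun k => if Nat.eqb k n then z else c k.

(* Wirtinger derivative w.r.t. conj(c_n) of a real-valued f, c_n = a_n + j b_n:
   (1/2) (df/da_n + j df/db_n) *)
Definition wirtinger (f : (nat -> C) -> R) (c : nat -> C) (n : nat) : C :=
  let da := Derive (fun t => f (upd c n (Cplus (c n) (RtoC t)))) 0 in
  let db := Derive (fun t => f (upd c n (Cplus (c n) (Cmult jC (RtoC t))))) 0 in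
  Cmult (RtoC (/ 2)) (Cplus (RtoC da) (Cmult jC (RtoC db))).

From Stdlib Require Import Reals Lra Lia.
From Coquelicot Require Import Coquelicot.
Open Scope R_scope.

(* Since h_n(c_n) = c_n/|c_n| only sees the phase of c_n, moving c_n along a direction d
   changes h_n at the rate j c_n Im(conj(c_n) d)/|c_n|^3.  Hence every directional
   derivative of L in c_n is a multiple of Im(conj(c_n) d), and the Wirtinger derivative
   is g/(2|c_n|^3) j c_n for a real g = (8N^2)^-1 sum_m 4 (|p_m|^2 - |i_m|^2) Re(conj(p_m) w_mn j c_n).
   As |h_n| = 1, |p_m| <= N max|w_mn|, which bounds both |p_m|^2 and the attainable targets,
   and so |g|; for the unitary DFT the bound collapses to 1/(4|c_n|). *)

Lemma csum_ext (K : nat) (f g : nat -> C) :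
  (forall k, (k < K)%nat -> f k = g k) -> csum K f = csum K g.
Proof.
  induction K as [|K IH]; intros Hfg; simpl; [reflexivity|].
  rewrite IH, Hfg by (lia || (intros; apply Hfg; lia)); reflexivity.
Qed.

Lemma csum_eq_off (K n : nat) (f g : nat -> C) : (n < K)%nat ->
  (forall k, (k < K)%nat -> k <> n -> f k = g k) ->
  csum K f = (csum K g + (f n - g n))%C.
Proof.
  induction K as [|K IH]; intros Hn Hfg; simpl; [lia|].
  destruct (Nat.eq_dec n K) as [-> | HnK].
  - rewrite (csum_ext K f g) by (intros k Hk; apply Hfg; lia); ring.
  - rewrite IH, (Hfg K) by (lia || intros; apply Hfg; lia); ring.
Qed.

Lemma Cmod_csum_le (K : nat) (f : nat -> C) (B : R) :
  (forall k, (k < K)%nat -> Cmod (f k) <= B) -> Cmod (csum K f) <= INR K * B.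
Proof.
  induction K as [|K IH]; intros Hf; cbn [csum].
  - rewrite Cmod_0; simpl; lra.
  - rewrite S_INR; eapply Rle_trans; [apply Cmod_triangle|].
    assert (IHK := IH (fun k Hk => Hf k (Nat.lt_lt_succ_r _ _ Hk))).
    assert (HK := Hf K (Nat.lt_succ_diag_r K)); lra.
Qed.

Lemma rsum_ext (K : nat) (f g : nat -> R) :
  (forall k, (k < K)%nat -> f k = g k) -> rsum K f = rsum K g.
Proof.
  induction K as [|K IH]; intros Hfg; simpl; [reflexivity|].
  rewrite IH, Hfg by (lia || (intros; apply Hfg; lia)); reflexivity.
Qed.

Lemma rsum_scal (K : nat) (a : R) (f : nat -> R) :
  rsum K (fun k => a * f k) = a * rsum K f.
Proof. induction K as [|K IH]; simpl; [ring | rewrite IH; ring]. Qed.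

Lemma Rabs_rsum_le (K : nat) (f : nat -> R) (B : R) :
  (forall k, (k < K)%nat -> Rabs (f k) <= B) -> Rabs (rsum K f) <= INR K * B.
Proof.
  induction K as [|K IH]; intros Hf; cbn [rsum].
  - rewrite Rabs_R0; simpl; lra.
  - rewrite S_INR; eapply Rle_trans; [apply Rabs_triang|].
    assert (IHK := IH (fun k Hk => Hf k (Nat.lt_lt_succ_r _ _ Hk))).
    assert (HK := Hf K (Nat.lt_succ_diag_r K)); lra.
Qed.

Lemma is_derive_rsum (K : nat) (F : nat -> R -> R) (F' : nat -> R) (x : R) :
  (forall k, (k < K)%nat -> is_derive (F k) x (F' k)) ->
  is_derive (fun t => rsum K (fun k => F k t)) x (rsum K F').
Proof.
  induction K as [|K IH]; intros HF; simpl.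
  - apply (is_derive_const (V := R_NormedModule)).
  - apply (is_derive_plus (fun t => rsum K (fun k => F k t)) (F K)).
    + apply IH; intros; apply HF; lia.
    + apply HF; lia.
Qed.

Lemma is_derive_sqr_sub (g : R -> R) (x l i : R) :
  is_derive g x l -> is_derive (fun t => (g t - i) ^ 2) x (2 * (g x - i) * l).
Proof.
  intros Hg; auto_derive; [eexists; exact Hg|].
  rewrite (is_derive_unique (fun t : R => g t) x l Hg); ring.
Qed.

Definition is_derive_C (f : R -> C) (x : R) (l : C) : Prop :=
  is_derive (fun t => Re (f t)) x (Re l) /\ is_derive (fun t => Im (f t)) x (Im l).

(* [auto_derive] cannot see through [Re (f t)] for an opaque [f : R -> C], so the
   components are first named as real functions [u] and [v]. *)
Ltac derive_components f x Hu Hv expr :=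
  let u := fresh "u" in let v := fresh "v" in
  pose (u t := Re (f t)); pose (v t := Im (f t));
  apply (is_derive_ext (expr u v)); [intros; unfold u, v, Re, Im; simpl; ring|];
  auto_derive;
  [ repeat split; eexists; first [exact Hu | exact Hv]
  | rewrite (is_derive_unique (fun t : R => u t) x _ Hu), (is_derive_unique (fun t : R => v t) x _ Hv);
    unfold u, v, Re, Im; simpl; ring ].

Lemma is_derive_C_line (z d : C) (x : R) :
  is_derive_C (fun t => (z + RtoC t * d)%C) x d.
Proof. split; unfold Re, Im; simpl; auto_derive; auto; ring. Qed.

Lemma is_derive_C_affine (f : R -> C) (x : R) (l p w q : C) :
  is_derive_C f x l -> is_derive_C (fun t => (p + w * (f t - q))%C) x (w * l)%C.
Proof.
  intros [Hu Hv]; split.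
  - derive_components f x Hu Hv
      (fun u v : R -> R => fun t => Re p + (Re w * (u t - Re q) - Im w * (v t - Im q))).
  - derive_components f x Hu Hv
      (fun u v : R -> R => fun t => Im p + (Re w * (v t - Im q) + Im w * (u t - Re q))).
Qed.

Lemma is_derive_Cmod2 (f : R -> C) (x : R) (l : C) :
  is_derive_C f x l -> is_derive (fun t => Cmod (f t) ^ 2) x (2 * Re (Cconj (f x) * l)).
Proof.
  intros [Hu Hv].
  apply (is_derive_ext (fun t => Re (f t) ^ 2 + Im (f t) ^ 2)).
  { intros t; rewrite Cmod2_alt; reflexivity. }
  derive_components f x Hu Hv (fun u v : R -> R => fun t => u t ^ 2 + v t ^ 2).
Qed.

Lemma Cmod_hph (x : C) : x <> RtoC 0 -> Cmod (hph x) = 1.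
Proof.
  intros Hx; assert (Hr : 0 < Cmod x) by now apply Cmod_gt_0.
  unfold hph; rewrite Cmod_mult, Cmod_R, Rabs_pos_eq by (left; apply Rinv_0_lt_compat, Hr).
  field; lra.
Qed.

Lemma is_derive_inv_Cmod_line (z d : C) : z <> RtoC 0 ->
  is_derive (fun t => / Cmod (z + RtoC t * d)) 0 (- Re (Cconj z * d) / Cmod z ^ 3).
Proof.
  intros Hz.
  assert (Hs : 0 < Re z ^ 2 + Im z ^ 2) by (rewrite <- Cmod2_alt; apply pow_lt, Cmod_gt_0, Hz).
  destruct z as [a b], d as [d1 d2]; unfold Re, Im in Hs; simpl in Hs.
  assert (Hr : 0 < sqrt (a * a + b * b)) by (apply sqrt_lt_R0; lra).
  apply (is_derive_ext (fun t => / sqrt ((a + t * d1) * (a + t * d1) + (b + t * d2) * (b + t * d2)))).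
  { intros t; unfold Cmod; simpl; do 3 f_equal; ring. }
  replace (Cmod (a, b)) with (sqrt (a * a + b * b)) by (unfold Cmod; simpl; f_equal; ring).
  auto_derive;
    replace ((a + 0 * d1) * (a + 0 * d1) + (b + 0 * d2) * (b + 0 * d2)) with (a * a + b * b) by ring.
  - repeat split; lra.
  - unfold Re; simpl; field; lra.
Qed.

Definition phase_dir (z d : C) : C :=
  (RtoC (Im (Cconj z * d) / Cmod z ^ 3) * (jC * z))%C.

Lemma is_derive_C_hph_line (z d : C) : z <> RtoC 0 ->
  is_derive_C (fun t => hph (z + RtoC t * d)) 0 (phase_dir z d).
Proof.
  intros Hz.
  assert (Hr : 0 < Cmod z) by now apply Cmod_gt_0.
  assert (Hr2 := Cmod2_alt z).
  assert (Hinv := is_derive_inv_Cmod_line z d Hz).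
  destruct (is_derive_C_line z d 0) as [Hre Him].
  assert (Hz0 : (z + RtoC 0 * d)%C = z) by ring.
  split.
  - apply (is_derive_ext (fun t => / Cmod (z + RtoC t * d) * Re (z + RtoC t * d))).
    { intros t; unfold hph, Re; simpl; ring. }
    replace (Re (phase_dir z d)) with
      (- Re (Cconj z * d) / Cmod z ^ 3 * Re (z + RtoC 0 * d) + / Cmod (z + RtoC 0 * d) * Re d).
    + apply (is_derive_mult _ _ _ _ _ Hinv Hre Rmult_comm).
    + rewrite Hz0. destruct z as [a b], d as [d1 d2]; unfold phase_dir, jC, Re, Im; simpl.
      field_simplify; [| lra | lra]. rewrite Hr2. unfold Re, Im; simpl. field. lra.
  - apply (is_derive_ext (fun t => / Cmod (z + RtoC t * d) * Im (z + RtoC t * d))).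
    { intros t; unfold hph, Im; simpl; ring. }
    replace (Im (phase_dir z d)) with
      (- Re (Cconj z * d) / Cmod z ^ 3 * Im (z + RtoC 0 * d) + / Cmod (z + RtoC 0 * d) * Im d).
    + apply (is_derive_mult _ _ _ _ _ Hinv Him Rmult_comm).
    + rewrite Hz0. destruct z as [a b], d as [d1 d2]; unfold phase_dir, jC, Re, Im; simpl.
      field_simplify; [| lra | lra]. rewrite Hr2. unfold Re, Im; simpl. field. lra.
Qed.

Lemma pm_upd (N : nat) (w : nat -> nat -> C) (c : nat -> C) (n m : nat) (z : C) :
  (n < N)%nat -> pm N w (upd c n z) m = (pm N w c m + w m n * (hph z - hph (c n)))%C.
Proof.
  intros Hn; unfold pm.
  rewrite (csum_eq_off N n _ (fun k => w m k * hph (c k))%C Hn).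
  - unfold upd; rewrite Nat.eqb_refl; f_equal; ring.
  - intros k _ Hk; unfold upd; apply Nat.eqb_neq in Hk; rewrite Hk; reflexivity.
Qed.

Definition loss_coef (N M : nat) (w : nat -> nat -> C) (i2 : nat -> R) (c : nat -> C) (n : nat) : R :=
  / (8 * INR N ^ 2) * rsum M (fun m =>
    4 * (Cmod (pm N w c m) ^ 2 - i2 m) * Re (Cconj (pm N w c m) * w m n * (jC * c n))).

Lemma is_derive_Loss_line (N M : nat) (w : nat -> nat -> C) (i2 : nat -> R) (c : nat -> C)
    (n : nat) (d : C) : (n < N)%nat -> c n <> RtoC 0 ->
  is_derive (fun t => Loss N M w i2 (upd c n (c n + RtoC t * d)))
    0 (loss_coef N M w i2 c n * (Im (Cconj (c n) * d) / Cmod (c n) ^ 3)).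
Proof.
  intros Hn Hz; unfold Loss, loss_coef.
  replace (_ * _ * _) with (/ (8 * INR N ^ 2) * rsum M (fun m =>
    2 * (Cmod (pm N w c m) ^ 2 - i2 m) * (2 * Re (Cconj (pm N w c m) * (w m n * phase_dir (c n) d))))).
  2: { rewrite (Rmult_assoc (/ _)); f_equal.
       rewrite (Rmult_comm (rsum M _)), <- rsum_scal.
       apply rsum_ext; intros m _; unfold phase_dir, jC, Re, Im; simpl; ring. }
  apply is_derive_scal, is_derive_rsum; intros m _.
  assert (Hline : is_derive_C (fun t => pm N w c m + w m n * (hph (c n + RtoC t * d) - hph (c n)))%C
                    0 (w m n * phase_dir (c n) d)%C)
    by exact (is_derive_C_affine _ _ _ _ _ _ (is_derive_C_hph_line _ _ Hz)).
  assert (Hval : (pm N w c m + w m n * (hph (c n + RtoC 0 * d) - hph (c n)))%C = pm N w c m)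
    by (replace (c n + RtoC 0 * d)%C with (c n) by ring; ring).
  assert (Hsq := is_derive_sqr_sub _ _ _ (i2 m) (is_derive_Cmod2 _ _ _ Hline)).
  cbv beta in Hsq; rewrite Hval in Hsq.
  eapply is_derive_ext; [|exact Hsq].
  intros t; cbv beta; rewrite pm_upd by exact Hn; reflexivity.
Qed.

Lemma wirtinger_Loss (N M : nat) (w : nat -> nat -> C) (i2 : nat -> R) (c : nat -> C) (n : nat) :
  (n < N)%nat -> c n <> RtoC 0 ->
  wirtinger (Loss N M w i2) c n =
  (RtoC (loss_coef N M w i2 c n / (2 * Cmod (c n) ^ 3)) * (jC * c n))%C.
Proof.
  intros Hn Hz; unfold wirtinger; cbv zeta.
  rewrite (Derive_ext (fun t => Loss N M w i2 (upd c n (c n + RtoC t)))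
                      (fun t => Loss N M w i2 (upd c n (c n + RtoC t * RtoC 1))))
    by (intros t; rewrite Cmult_1_r; reflexivity).
  rewrite (Derive_ext (fun t => Loss N M w i2 (upd c n (c n + jC * RtoC t)))
                      (fun t => Loss N M w i2 (upd c n (c n + RtoC t * jC))))
    by (intros t; rewrite (Cmult_comm jC); reflexivity).
  rewrite 2!(is_derive_unique _ _ _ (is_derive_Loss_line N M w i2 c n _ Hn Hz)).
  assert (Hr : Cmod (c n) <> 0) by (apply Rgt_not_eq, Cmod_gt_0, Hz).
  revert Hr; generalize (loss_coef N M w i2 c n) (Cmod (c n)); intros G r Hr.
  destruct (c n) as [a b]; unfold jC, Im; apply injective_projections; simpl; field; exact Hr.
Qed.

Lemma Cmod_pm_le (N : nat) (w : nat -> nat -> C) (c : nat -> C) (m : nat) (rho : R) :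
  (forall k, (k < N)%nat -> Cmod (w m k) <= rho) -> (forall k, (k < N)%nat -> c k <> RtoC 0) ->
  Cmod (pm N w c m) <= INR N * rho.
Proof.
  intros Hw Hc; apply Cmod_csum_le; intros k Hk.
  rewrite Cmod_mult, Cmod_hph by (apply Hc, Hk); rewrite Rmult_1_r; apply Hw, Hk.
Qed.

Section LossGradientBound.

Variables (N M : nat) (w : nat -> nat -> C) (i2 : nat -> R) (c : nat -> C) (n : nat) (rho : R).
Hypothesis Hn : (n < N)%nat.
Hypothesis Hw : forall m k, (m < M)%nat -> (k < N)%nat -> Cmod (w m k) <= rho.
Hypothesis Hc : forall k, (k < N)%nat -> c k <> RtoC 0.
Hypothesis Hi2 : forall m, (m < M)%nat -> 0 <= i2 m <= (INR N * rho) ^ 2.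

Lemma Rabs_loss_coef_le :
  Rabs (loss_coef N M w i2 c n) <= INR M * INR N * rho ^ 4 * Cmod (c n) / 2.
Proof.
  assert (HN : 0 < INR N) by (apply lt_0_INR; lia).
  unfold loss_coef; rewrite Rabs_mult, Rabs_pos_eq by (left; apply Rinv_0_lt_compat; nra).
  apply Rle_trans with (/ (8 * INR N ^ 2) *
    (INR M * (4 * (INR N * rho) ^ 2 * (INR N * rho * rho * Cmod (c n))))).
  2: { right; field; lra. }
  apply Rmult_le_compat_l; [left; apply Rinv_0_lt_compat; nra|].
  apply Rabs_rsum_le; intros m Hm.
  assert (Hrho : 0 <= rho) by (eapply Rle_trans; [apply Cmod_ge_0 | apply (Hw m n Hm Hn)]).
  assert (Hp := Cmod_pm_le N w c m rho (fun k Hk => Hw m k Hm Hk) Hc).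
  assert (Hp0 := Cmod_ge_0 (pm N w c m)).
  assert (Hres : Rabs (Cmod (pm N w c m) ^ 2 - i2 m) <= (INR N * rho) ^ 2).
  { assert (Hsq : Cmod (pm N w c m) ^ 2 <= (INR N * rho) ^ 2) by (apply pow_incr; lra).
    specialize (Hi2 m Hm); apply Rabs_le; nra. }
  assert (Hcorr : Rabs (Re (Cconj (pm N w c m) * w m n * (jC * c n))) <=
                  INR N * rho * rho * Cmod (c n)).
  { eapply Rle_trans; [apply re_le_Cmod|].
    rewrite !Cmod_mult, Cmod_conj; change jC with Ci; rewrite Cmod_Ci, Rmult_1_l.
    apply Rmult_le_compat; try apply Rmult_le_compat; auto using Cmod_ge_0, Rmult_le_pos, Rle_refl. }
  rewrite !Rabs_mult, (Rabs_pos_eq 4) by lra.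
  apply Rmult_le_compat;
    [apply Rmult_le_pos; [lra | apply Rabs_pos] | apply Rabs_pos | apply Rmult_le_compat_l; lra | exact Hcorr].
Qed.

Lemma Cmod_wirtinger_Loss_le :
  Cmod (wirtinger (Loss N M w i2) c n) <= INR M * INR N * rho ^ 4 / (4 * Cmod (c n)).
Proof.
  assert (Hr : 0 < Cmod (c n)) by (apply Cmod_gt_0, Hc, Hn).
  rewrite (wirtinger_Loss N M w i2 c n Hn (Hc n Hn)), !Cmod_mult, Cmod_R.
  assert (Hr3 : 0 < 2 * Cmod (c n) ^ 3) by (apply Rmult_lt_0_compat; [lra | apply pow_lt, Hr]).
  change jC with Ci; rewrite Cmod_Ci, Rmult_1_l, Rabs_div, (Rabs_pos_eq (2 * _)) by lra.
  apply Rle_trans with (INR M * INR N * rho ^ 4 * Cmod (c n) / 2 / (2 * Cmod (c n) ^ 3) * Cmod (c n)).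
  - apply Rmult_le_compat_r; [lra|].
    apply Rmult_le_compat_r; [left; apply Rinv_0_lt_compat; nra | apply Rabs_loss_coef_le].
  - right; field; lra.
Qed.

End LossGradientBound.

Lemma Cmod_dft (N m k : nat) : (1 <= N)%nat -> Cmod (dft N m k) = / sqrt (INR N).
Proof.
  intros HN; assert (Hs : 0 < sqrt (INR N)) by (apply sqrt_lt_R0, lt_0_INR; lia).
  unfold dft; rewrite Cmod_mult, Cmod_R, Rabs_pos_eq by (left; apply Rinv_0_lt_compat, Hs).
  set (x := 2 * PI * INR m * INR k / INR N).
  assert (Hunit : Cmod (cos x, - sin x) = 1).
  { unfold Cmod; simpl.
    replace (cos x * (cos x * 1) + - sin x * (- sin x * 1)) with 1 by
      (pose proof (sin2_cos2 x) as Hsc; unfold Rsqr in Hsc; nra).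
    apply sqrt_1. }
  rewrite Hunit; ring.
Qed.

Theorem theorem2 (N : nat) (HN : (1 <= N)%nat) (i2 : nat -> R)
  (Hattain : exists Cv : nat -> C,
      (forall n, (n < N)%nat -> Cv n <> RtoC 0) /\
      (forall m, (m < N)%nat -> i2 m = Cmod (pm N (dft N) Cv m) ^ 2))
  (c : nat -> C) (Hc : forall n, (n < N)%nat -> c n <> RtoC 0)
  (n : nat) (Hn : (n < N)%nat) :
  Cmod (wirtinger (Loss N N (dft N) i2) c n) <= / Cmod (c n).
Proof.
  destruct Hattain as [Cv [HCv Hi2]].
  assert (HNpos : 0 < INR N) by (apply lt_0_INR; lia).
  assert (Hs : 0 < sqrt (INR N)) by (apply sqrt_lt_R0, HNpos).
  set (rho := / sqrt (INR N)).
  assert (Hrho4 : rho ^ 4 = / INR N ^ 2).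
  { rewrite <- (sqrt_sqrt (INR N)) by lra; unfold rho; field; lra. }
  assert (Hw : forall m k, (m < N)%nat -> (k < N)%nat -> Cmod (dft N m k) <= rho)
    by (intros; rewrite Cmod_dft by exact HN; apply Rle_refl).
  assert (Htargets : forall m, (m < N)%nat -> 0 <= i2 m <= (INR N * rho) ^ 2).
  { intros m Hm; rewrite Hi2 by exact Hm.
    assert (Hp := Cmod_pm_le N (dft N) Cv m rho (fun k => Hw m k Hm) HCv).
    split; [apply pow2_ge_0 | apply pow_incr; split; [apply Cmod_ge_0 | exact Hp]]. }
  assert (Hr : 0 < Cmod (c n)) by (apply Cmod_gt_0, Hc, Hn).
  eapply Rle_trans; [exact (Cmod_wirtinger_Loss_le N N (dft N) i2 c n rho Hn Hw Hc Htargets)|].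
  rewrite Hrho4; apply Rle_trans with (/ 4 * / Cmod (c n)); [right; field; lra|].
  assert (0 < / Cmod (c n)) by (apply Rinv_0_lt_compat, Hr); lra.
Qed.
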